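(* Let $p,q,K$ be complex numbers with $p\neq0$ and $K(1+q/p)\neq1$, and set $K'=K\big(K(1+q/p)-1\big)^{-1}$. For any complex $L$ let $$\hat R(L;p,q)=\begin{pmatrix}1&0&0&0\\0&1-L&L/p&0\\0&Lq&1-Lq/p&0\\0&0&0&1\end{pmatrix},\qquad R(L;p,q)=P\hat R(L;p,q).$$ Then $R(K';p,q)$ is invertible and $$P\,R(K;p,q)\,P=\big(R(K';p,q)\big)^{-1}.$$ In particular, for $K=2p(p+q)^{-1}$ (assuming $p+q\neq0$) one has $K'=K$ and $\hat R(K;p,q)^2=I_4$.
   Context: Matrices are written in the ordered basis $e_1\otimes e_1,e_1\otimes e_2,e_2\otimes e_1,e_2\otimes e_2$ of $\mathbb{C}^2\otimes\mathbb{C}^2$; $P$ is the flip matrix, i.e. the $4\times4$ permutation matrix swapping the second and third basis vectors. The matrix $PRP$ is what the paper denotes $(21)R$. *)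

From HB Require Import structures.
From mathcomp Require Import all_boot all_order all_algebra.
From mathcomp Require Import complex.
From mathcomp Require Import reals.
Set Implicit Arguments. Unset Strict Implicit. Unset Printing Implicit Defensive.
Import Order.TTheory GRing.Theory Num.Theory.
Local Open Scope ring_scope.

Notation Cplx R := (R[i])%type.

Section Defs.
Variable R : realType.
Local Notation C := (Cplx R).

(* Basis order e1e1, e1e2, e2e1, e2e2 = indices 0,1,2,3. *)
Definition flipP : 'M[C]_4 :=
  \matrix_(i < 4, j < 4)
    (if ((i : nat) == 1%N) then ((j : nat) == 2%N)%:R
     else if ((i : nat) == 2%N) then ((j : nat) == 1%N)%:R
     else ((i : nat) == j)%:R).

Definition Rhat (L p q : C) : 'M[C]_4 :=
  \matrix_(i < 4, j < 4)
    match (i : nat), (j : nat) with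
    | 0, 0 => 1
    | 1, 1 => 1 - L
    | 1, 2 => L / p
    | 2, 1 => L * q
    | 2, 2 => 1 - L * q / p
    | 3, 3 => 1
    | _, _ => 0
    end.

Definition Rmat (L p q : C) : 'M[C]_4 := flipP *m Rhat L p q.

Definition Kprime (K p q : C) : C := K * (K * (1 + q / p) - 1)^-1.
End Defs.

From HB Require Import structures.
From mathcomp Require Import all_boot all_order all_algebra.
From mathcomp Require Import complex.
From mathcomp Require Import reals.
From mathcomp Require Import ring.

Set Implicit Arguments.
Unset Strict Implicit.
Unset Printing Implicit Defensive.

Import Order.TTheory GRing.Theory Num.Theory.
Local Open Scope ring_scope.

(* Since the flip P is an involution, P R(K) P = Rhat(K) P, which is a left
   inverse of R(K') = P Rhat(K') as soon as Rhat(K) Rhat(K') = 1; the latter is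
   an entrywise rational identity once K' is written as K p / (K (p + q) - p).
   For K = 2 p / (p + q) one has K (1 + q / p) = 2, whence K' = K. *)

Lemma conj_involution_invmx (F : comUnitRingType) (n : nat) (P A B : 'M[F]_n) :
  P *m P = 1%:M -> A *m B = 1%:M ->
  P *m B \in unitmx /\ P *m (P *m A) *m P = invmx (P *m B).
Proof.
move=> PP AB.
have APPB : (A *m P) *m (P *m B) = 1%:M.
  by rewrite mulmxA -(mulmxA A) PP mulmx1.
have [_ unitPB] := mulmx1_unit APPB.
split=> //.
by rewrite mulmxA PP mul1mx -[RHS]mul1mx -APPB -(mulmxA (A *m P)) mulmxV // mulmx1.
Qed.

Section Rhat.
Variable R : realType.
Implicit Types p q K : R[i].

Lemma flipP_invol : flipP R *m flipP R = 1%:M.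
Proof.
apply/matrixP => i j; rewrite !mxE !big_ord_recl big_ord0 /= !mxE.
by case: i => [[|[|[|[|i]]]] Hi] //; case: j => [[|[|[|[|j]]]] Hj] //=; ring.
Qed.

Lemma Kprime_denomE p q K : p != 0 ->
  K * (1 + q / p) - 1 = (K * (p + q) - p) / p.
Proof. by move=> p0; field. Qed.

Lemma Rhat_Kprime p q K : p != 0 -> K * (1 + q / p) != 1 ->
  Rhat K p q *m Rhat (Kprime K p q) p q = 1%:M.
Proof.
move=> p0 K1.
have d0 : K * (p + q) - p != 0.
  by apply: contra K1 => /eqP d0; rewrite -subr_eq0 Kprime_denomE // d0 mul0r.
rewrite /Kprime Kprime_denomE // invf_div.
apply/matrixP => i j; rewrite !mxE !big_ord_recl big_ord0 /= !mxE.
case: i => [[|[|[|[|i]]]] Hi] //; case: j => [[|[|[|[|j]]]] Hj] //=;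
  first [ring | by field; rewrite ?p0 ?d0].
Qed.

End Rhat.

Theorem mainTheorem9 (R : realType) (p q : R[i]) (hp : p != 0) :
  (forall K : R[i], K * (1 + q / p) != 1 ->
     Rmat (Kprime K p q) p q \in unitmx /\
     flipP R *m Rmat K p q *m flipP R = invmx (Rmat (Kprime K p q) p q)) /\
  (p + q != 0 ->
     let K := 2 * p / (p + q) in
     Kprime K p q = K /\ Rhat K p q *m Rhat K p q = 1%:M).
Proof.
split=> [K K1 | pq0 K].
  exact: conj_involution_invmx (flipP_invol R) (Rhat_Kprime hp K1).
have K2 : K * (1 + q / p) = 2 by rewrite /K; field; rewrite hp pq0.
have K1 : K * (1 + q / p) != 1 by rewrite K2 (eqr_nat _ 2 1).
have KK : Kprime K p q = K by rewrite /Kprime K2 [2 - 1](addrK 1) invr1 mulr1.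
by split=> //; rewrite -{2}KK Rhat_Kprime.
Qed.
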